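(* Let $R$ be a local ring and $s\in R$ a central element. Then $A\in M_2(R;s)$ is strongly clean if and only if one of the following holds: (1) $A\in U\big(M_2(R;s)\big)$; (2) $I_2-A\in U\big(M_2(R;s)\big)$; (3) $s\in U(R)$ and $A$ is similar to $\left[\begin{smallmatrix} w&0\\ 0&v\end{smallmatrix}\right]$ for some $v\in 1+J(R)$, $w\in J(R)$; (4) $s\in J(R)$ and $A$ is similar to $\left[\begin{smallmatrix} v&0\\ 0&w\end{smallmatrix}\right]$ or to $\left[\begin{smallmatrix} w&0\\ 0&v\end{smallmatrix}\right]$ for some $v\in 1+J(R)$, $w\in J(R)$.
   Context: All rings are associative with identity. A ring $R$ is local if $R/J(R)$ is a division ring, where $J(R)$ is the Jacobson radical; $U(T)$ is the group of units of a ring $T$. For a ring $R$ and a central element $s\in R$, $M_2(R;s)$ denotes the ring whose elements are the $2\times 2$ arrays $\left[\begin{smallmatrix} a&b\\ c&d\end{smallmatrix}\right]$ with $a,b,c,d\in R$, with componentwise addition and multiplication $\left[\begin{smallmatrix} a&b\\ c&d\end{smallmatrix}\right]\left[\begin{smallmatrix} a'&b'\\ c'&d'\end{smallmatrix}\right]=\left[\begin{smallmatrix} aa'+s^2bc'&ab'+bd'\\ ca'+dc'&s^2cb'+dd'\end{smallmatrix}\right]$, with identity $I_2$. Two elements $A,B\in M_2(R;s)$ are similar if $B=P^{-1}AP$ for some unit $P$ of $M_2(R;s)$. An element $a$ of a ring $T$ is strongly clean if there is an idempotent $e\in T$ with $ae=ea$ and $a-e\in U(T)$. *)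

From mathcomp Require Import all_boot all_algebra.
Set Implicit Arguments. Unset Strict Implicit. Unset Printing Implicit Defensive.
Import GRing.Theory.
Local Open Scope ring_scope.

Definition in_jacobson (R : unitRingType) (x : R) : Prop :=
  forall r : R, (1 - r * x) \is a GRing.unit.

(* R is local: R/J(R) is a division ring, i.e. R/J(R) is nonzero
   (1 \notin J(R)) and every class x + J(R) with x \notin J(R) has a
   two-sided inverse y + J(R) in R/J(R). *)
Definition local_ring (R : unitRingType) : Prop :=
  ~ in_jacobson (1 : R) /\
  forall x : R, ~ in_jacobson x ->
    exists y : R, in_jacobson (1 - x * y) /\ in_jacobson (1 - y * x).

Definition central (R : ringType) (s : R) : Prop := forall x : R, s * x = x * s.

Record M2 (R : Type) := mkM2 { m11 : R; m12 : R; m21 : R; m22 : R }.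

Section M2ops.
Variable (R : ringType) (s : R).

Definition M2mul (A B : M2 R) : M2 R :=
  mkM2 (m11 A * m11 B + s ^+ 2 * m12 A * m21 B)
       (m11 A * m12 B + m12 A * m22 B)
       (m21 A * m11 B + m22 A * m21 B)
       (s ^+ 2 * m21 A * m12 B + m22 A * m22 B).

Definition M2sub (A B : M2 R) : M2 R :=
  mkM2 (m11 A - m11 B) (m12 A - m12 B) (m21 A - m21 B) (m22 A - m22 B).

Definition M2one : M2 R := mkM2 1 0 0 1.

Definition M2diag (a d : R) : M2 R := mkM2 a 0 0 d.

Definition M2unit (P : M2 R) : Prop :=
  exists Q : M2 R, M2mul P Q = M2one /\ M2mul Q P = M2one.

Definition M2similar (A B : M2 R) : Prop :=
  exists P Q : M2 R, M2mul P Q = M2one /\ M2mul Q P = M2one /\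
    B = M2mul (M2mul Q A) P.

Definition M2_strongly_clean (A : M2 R) : Prop :=
  exists E : M2 R, M2mul E E = E /\ M2mul A E = M2mul E A /\ M2unit (M2sub A E).

End M2ops.

From mathcomp Require Import all_boot all_algebra.
From Stdlib Require Import Classical.
Set Implicit Arguments. Unset Strict Implicit. Unset Printing Implicit Defensive.
Import GRing.Theory.
Local Open Scope ring_scope.

(* Over a local ring every idempotent E of M_2(R;s) is similar to one of the diagonal
   idempotents D = 0, I, diag(1,0), diag(0,1): u := D E + (I - D)(I - E) always satisfies
   u E = D E = D u, and for a suitable D it is a unit, because either its (1,2) entry lies
   in J(R) or idempotency forces its Schur complement to be 1.  Conjugating a strongly
   clean decomposition of A by u makes A commute with D, so A is a unit, I - A is a unit,
   or A is diagonal; and every diagonal matrix over a local ring satisfies the criterion,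
   where exchanging the two diagonal entries is a similarity when s is a unit.
   Conversely each case of the criterion is similar to a matrix with an evident diagonal
   strongly clean decomposition. *)

Section Jacobson.
Variable R : unitRingType.
Local Notation jac := (@in_jacobson R).

Lemma jacobsonN (x : R) : jac x -> jac (- x).
Proof. by move=> jx r; rewrite mulrN -mulNr. Qed.

Lemma jacobsonMl (x y : R) : jac y -> jac (x * y).
Proof. by move=> jy r; rewrite mulrA. Qed.

Lemma unitrDjacobson (d j : R) : d \is a GRing.unit -> jac j -> (d + j) \is a GRing.unit.
Proof.
move=> ud jj; have -> : d + j = d * (1 - (- d^-1) * j).
  by rewrite mulNr opprK mulrDr mulr1 mulrA (mulrV ud) mul1r.
by rewrite unitrMr.
Qed.

Lemma unitrBjacobson (d j : R) : d \is a GRing.unit -> jac j -> (d - j) \is a GRing.unit.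
Proof. by move=> ud /jacobsonN; apply: unitrDjacobson. Qed.

Lemma jacobson_unit1B (j : R) : jac j -> (1 - j) \is a GRing.unit.
Proof. by apply: unitrBjacobson; rewrite unitr1. Qed.

Lemma jacobson_unitB1 (j : R) : jac j -> (j - 1) \is a GRing.unit.
Proof. by move/jacobson_unit1B; rewrite -opprB unitrN. Qed.

Lemma jacobson_subr1_unit (v : R) : jac (v - 1) -> v \is a GRing.unit.
Proof. by move/(unitrDjacobson (unitr1 R)); rewrite addrC subrK. Qed.

(* Units of R/J(R) lift to R: if x y and y x are units, so is x. *)
Lemma local_unit_or_jacobson (x : R) : local_ring R -> x \is a GRing.unit \/ jac x.
Proof.
move=> [_ loc]; case: (classic (jac x)) => jx; [by right | left].
have [y [jxy jyx]] := loc x jx.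
have uxy : x * y \is a GRing.unit by have := jacobson_unit1B jxy; rewrite opprB addrC subrK.
have uyx : y * x \is a GRing.unit by have := jacobson_unit1B jyx; rewrite opprB addrC subrK.
apply/unitrP; exists (y * (x * y)^-1); split; last by rewrite mulrA mulrV.
have -> : y * (x * y)^-1 = (y * x)^-1 * y.
  by rewrite -[RHS]mulr1 -(mulrV uxy) !mulrA -[_ * y * x]mulrA mulVr // mul1r.
by rewrite -mulrA mulVr.
Qed.

End Jacobson.

Ltac rsimpl := rewrite ?(mulr0, mul0r, addr0, add0r, subr0, sub0r, oppr0, opprK,
  mulrN, mulNr, mulrA, mul1r, mulr1, addNr, addrN).

Section M2Algebra.
Variables (R : unitRingType) (s : R).
Hypothesis s_central : central s.

Local Notation "X ** Y" := (M2mul s X Y) (at level 40, left associativity).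
Local Notation "X -- Y" := (M2sub X Y) (at level 50, left associativity).
Local Notation I := (M2one R).

Lemma mulr_sqrC (x : R) : x * s ^+ 2 = s ^+ 2 * x.
Proof. by rewrite expr2 mulrA -s_central -mulrA -s_central mulrA. Qed.

Lemma M2mulA X Y Z : X ** Y ** Z = X ** (Y ** Z).
Proof.
case: X => x1 x2 x3 x4; case: Y => y1 y2 y3 y4; case: Z => z1 z2 z3 z4.
rewrite /M2mul /=; have := mulr_sqrC; move: (s ^+ 2) => t tC.
by congr mkM2; rewrite !(mulrDl, mulrDr, mulrA) ?tC addrACA.
Qed.

Lemma M2mul1l X : I ** X = X.
Proof. by case: X => *; rewrite /M2mul /=; congr mkM2; rsimpl. Qed.

Lemma M2mul1r X : X ** I = X.
Proof. by case: X => *; rewrite /M2mul /=; congr mkM2; rsimpl. Qed.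

Lemma M2mulBl X Y Z : (X -- Y) ** Z = X ** Z -- Y ** Z.
Proof.
case: X => *; case: Y => *; case: Z => *; rewrite /M2mul /M2sub /=.
by congr mkM2; rewrite ?(mulrBl, mulrBr) opprD addrACA.
Qed.

Lemma M2mulBr X Y Z : Z ** (X -- Y) = Z ** X -- Z ** Y.
Proof.
case: X => *; case: Y => *; case: Z => *; rewrite /M2mul /M2sub /=.
by congr mkM2; rewrite ?(mulrBl, mulrBr) opprD addrACA.
Qed.

Lemma M2subrr (X : M2 R) : X -- X = M2diag 0 0.
Proof. by case: X => *; rewrite /M2sub /= !subrr. Qed.

Lemma M2subr0 (X : M2 R) : X -- M2diag 0 0 = X.
Proof. by case: X => *; rewrite /M2sub /= !subr0. Qed.

Lemma M2unitM X Y : M2unit s X -> M2unit s Y -> M2unit s (X ** Y).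
Proof.
move=> [X' [XX' X'X]] [Y' [YY' Y'Y]]; exists (Y' ** X'); split.
  by rewrite M2mulA -(M2mulA Y) YY' M2mul1l XX'.
by rewrite M2mulA -(M2mulA X') X'X M2mul1l Y'Y.
Qed.

Lemma M2unit_conj P Q X : P ** Q = I -> Q ** P = I -> M2unit s X -> M2unit s (Q ** X ** P).
Proof. by move=> PQ QP uX; apply: M2unitM; [apply: M2unitM => //; exists P|exists Q]. Qed.

Lemma M2unit_subC (X Y : M2 R) : M2unit s (X -- Y) -> M2unit s (Y -- X).
Proof.
pose neg (Z : M2 R) := mkM2 (- m11 Z) (- m12 Z) (- m21 Z) (- m22 Z).
have negM (Z W : M2 R) : neg Z ** neg W = Z ** W.
  by case: Z => *; case: W => *; rewrite /M2mul /=; congr mkM2; rsimpl.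
have -> : Y -- X = neg (X -- Y).
  by case: X => *; case: Y => *; rewrite /M2sub /=; congr mkM2; rewrite opprB.
by move=> [W [h1 h2]]; exists (neg W); rewrite !negM.
Qed.

Lemma M2unit_upper a b d : a \is a GRing.unit -> d \is a GRing.unit ->
  M2unit s (mkM2 a b 0 d).
Proof.
move=> ua ud; exists (mkM2 a^-1 (- (a^-1 * b * d^-1)) 0 d^-1).
rewrite /M2mul /=; split; congr mkM2; rsimpl;
by rewrite ?(mulrV ua, mulVr ua, mulrV ud, mulVr ud, mulrVK ud, mul1r, addNr, subrr).
Qed.

Lemma M2unit_lower a c d : a \is a GRing.unit -> d \is a GRing.unit ->
  M2unit s (mkM2 a 0 c d).
Proof.
move=> ua ud; exists (mkM2 a^-1 0 (- (d^-1 * c * a^-1)) d^-1).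
rewrite /M2mul /=; split; congr mkM2; rsimpl;
by rewrite ?(mulrV ua, mulVr ua, mulrV ud, mulVr ud, mulrVK ua, mul1r, addNr, subrr).
Qed.

Lemma M2unit_schur a b c d : a \is a GRing.unit ->
  (d - s ^+ 2 * c * a^-1 * b) \is a GRing.unit -> M2unit s (mkM2 a b c d).
Proof.
move=> ua ud.
have -> : mkM2 a b c d = mkM2 1 0 (c * a^-1) 1 ** mkM2 a b 0 (d - s ^+ 2 * c * a^-1 * b).
  rewrite /M2mul /=; congr mkM2; rsimpl; rewrite ?mulrVK //.
  by rewrite addrC subrK.
by apply: M2unitM; [apply: M2unit_lower; rewrite unitr1 | apply: M2unit_upper].
Qed.

Lemma M2unit_jacobson_offdiag a b c d : a \is a GRing.unit -> d \is a GRing.unit ->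
  in_jacobson b -> M2unit s (mkM2 a b c d).
Proof. by move=> ua ud jb; apply: M2unit_schur => //; apply/unitrBjacobson/jacobsonMl. Qed.

Lemma M2similar_refl A : M2similar s A A.
Proof. by exists I, I; rewrite !M2mul1l M2mul1r. Qed.

Lemma M2similar_sym A B : M2similar s A B -> M2similar s B A.
Proof.
move=> [P [Q [PQ [QP ->]]]]; exists Q, P; do 2 split => //.
by rewrite !M2mulA PQ M2mul1r -M2mulA PQ M2mul1l.
Qed.

Lemma M2similar_trans A B C : M2similar s A B -> M2similar s B C -> M2similar s A C.
Proof.
move=> [P [Q [PQ [QP ->]]]] [P' [Q' [PQ' [QP' ->]]]].
exists (P ** P'), (Q' ** Q); split; [|split]; last by rewrite !M2mulA.
  by rewrite M2mulA -(M2mulA P') PQ' M2mul1l PQ.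
by rewrite M2mulA -(M2mulA Q) QP M2mul1l QP'.
Qed.

Lemma M2unit_similar A B : M2similar s A B -> M2unit s B -> M2unit s A.
Proof. by case/M2similar_sym=> P [Q [PQ [QP ->]]]; apply: M2unit_conj. Qed.

Lemma M2similar_subl1 A B : M2similar s A B -> M2similar s (I -- A) (I -- B).
Proof.
move=> [P [Q [PQ [QP ->]]]]; exists P, Q; do 2 split => //.
by rewrite M2mulBr M2mulBl M2mul1r QP.
Qed.

Definition clean_pair (A E : M2 R) : Prop :=
  E ** E = E /\ A ** E = E ** A /\ M2unit s (A -- E).

Lemma clean_pair_conj P Q A E : P ** Q = I -> Q ** P = I ->
  clean_pair A E -> clean_pair (Q ** A ** P) (Q ** E ** P).
Proof.
move=> PQ QP [EE [AE uAE]].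
have PQK X : P ** (Q ** X) = X by rewrite -M2mulA PQ M2mul1l.
split; [|split].
- by rewrite !M2mulA PQK -(M2mulA E) EE.
- by rewrite !M2mulA PQK -(M2mulA A) AE !M2mulA PQK.
by rewrite -M2mulBl -M2mulBr; apply: M2unit_conj.
Qed.

Lemma strongly_clean_similar A B : M2similar s A B ->
  M2_strongly_clean s B -> M2_strongly_clean s A.
Proof.
case/M2similar_sym=> P [Q [PQ [QP ->]]] [E cBE].
by exists (Q ** E ** P); apply: clean_pair_conj.
Qed.

(* D E + (I - D)(I - E), written with subtraction only. *)
Definition intertwiner (D E : M2 R) : M2 R := D ** E -- (I -- D) ** (E -- I).

Lemma intertwinerP D E : D ** D = D -> E ** E = E ->
  intertwiner D E ** E = D ** intertwiner D E.
Proof.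
move=> DD EE; rewrite /intertwiner !(M2mulBl, M2mulBr) !(M2mul1l, M2mul1r).
by rewrite !M2mulA EE -(M2mulA D D) DD !M2subrr !M2subr0.
Qed.

Definition diag_idempotent (D : M2 R) : Prop :=
  [\/ D = M2diag 0 0, D = M2diag 1 1, D = M2diag 1 0 | D = M2diag 0 1].

Lemma diag_idempotentP D : diag_idempotent D -> D ** D = D.
Proof. by case=> ->; rewrite /M2mul /=; congr mkM2; rsimpl. Qed.

Section Idempotent.
Hypothesis R_local : local_ring R.
Variables e1 e2 e3 e4 : R.
Local Notation E := (mkM2 e1 e2 e3 e4).
Hypothesis E_idem : E ** E = E.

Lemma intertwiner11 : intertwiner (M2diag 1 1) E = E.
Proof. by rewrite /intertwiner /M2mul /M2sub /=; congr mkM2; rsimpl. Qed.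

Lemma intertwiner10 : intertwiner (M2diag 1 0) E = mkM2 e1 e2 (- e3) (1 - e4).
Proof. by rewrite /intertwiner /M2mul /M2sub /=; congr mkM2; rsimpl; rewrite ?opprB. Qed.

Lemma intertwiner01 : intertwiner (M2diag 0 1) E = mkM2 (1 - e1) (- e2) e3 e4.
Proof. by rewrite /intertwiner /M2mul /M2sub /=; congr mkM2; rsimpl; rewrite ?opprB. Qed.

Lemma intertwiner00 : intertwiner (M2diag 0 0) E = mkM2 (1 - e1) (- e2) (- e3) (1 - e4).
Proof. by rewrite /intertwiner /M2mul /M2sub /=; congr mkM2; rsimpl; rewrite ?opprB. Qed.

Lemma intertwiner_unit_jacobson : in_jacobson e2 ->
  exists2 D, diag_idempotent D & M2unit s (intertwiner D E).
Proof.
move=> je2; have jNe2 := jacobsonN je2.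
have [ue1|je1] := local_unit_or_jacobson e1 R_local;
  have [ue4|je4] := local_unit_or_jacobson e4 R_local.
- exists (M2diag 1 1); first by constructor 2.
  by rewrite intertwiner11; apply: M2unit_jacobson_offdiag.
- exists (M2diag 1 0); first by constructor 3.
  by rewrite intertwiner10; apply: M2unit_jacobson_offdiag => //; apply: jacobson_unit1B.
- exists (M2diag 0 1); first by constructor 4.
  by rewrite intertwiner01; apply: M2unit_jacobson_offdiag => //; apply: jacobson_unit1B.
exists (M2diag 0 0); first by constructor 1.
by rewrite intertwiner00; apply: M2unit_jacobson_offdiag => //; apply: jacobson_unit1B.
Qed.

(* When e2 is a unit, idempotency pins down e3 and e4 in terms of e1 and e2,
   and the Schur complement of the chosen intertwiner is exactly 1. *)
Lemma intertwiner_unit_e2unit : e2 \is a GRing.unit ->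
  exists2 D, diag_idempotent D & M2unit s (intertwiner D E).
Proof.
move=> ue2; move: E_idem; rewrite /M2mul /= => -[idem11 idem12 _ _].
have te3 : s ^+ 2 * e3 = e2^-1 * (e1 - e1 * e1).
  by rewrite -{1}idem11 addrAC subrr add0r -(mulr_sqrC e2) -[e2 * _ * e3]mulrA (mulKr ue2).
have e4E : e4 = 1 - e2^-1 * e1 * e2.
  rewrite -[e4](mulKr ue2) -[e2 * e4](addKr (e1 * e2)) idem12.
  by rewrite mulrDr mulVr // mulrN mulrA addrC.
have [ue1|je1] := local_unit_or_jacobson e1 R_local.
  exists (M2diag 1 0); first by constructor 3.
  rewrite intertwiner10; apply: M2unit_schur => //.
  suff -> : 1 - e4 - s ^+ 2 * - e3 / e1 * e2 = 1 by apply: unitr1.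
  rewrite mulrN !mulNr opprK te3 -(mulrA e2^-1).
  have -> : (e1 - e1 * e1) / e1 = 1 - e1 by rewrite mulrBl mulrV // mulrK.
  by rewrite mulrBr mulr1 mulrBl mulVr // -e4E subrK.
exists (M2diag 0 1); first by constructor 4.
have ue1' := jacobson_unit1B je1.
rewrite intertwiner01; apply: M2unit_schur => //.
suff -> : e4 - s ^+ 2 * e3 / (1 - e1) * - e2 = 1 by apply: unitr1.
rewrite mulrN opprK te3 -(mulrA e2^-1).
have -> : (e1 - e1 * e1) / (1 - e1) = e1 by rewrite -{1}[e1]mulr1 -mulrBr mulrK.
by rewrite e4E subrK.
Qed.

Lemma idempotent_intertwiner_unit :
  exists2 D, diag_idempotent D & M2unit s (intertwiner D E).
Proof.
have [ue2|je2] := local_unit_or_jacobson e2 R_local.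
  exact: intertwiner_unit_e2unit.
exact: intertwiner_unit_jacobson.
Qed.

End Idempotent.

Lemma idempotent_similar_diag E : local_ring R -> E ** E = E ->
  exists2 D, diag_idempotent D & M2similar s E D.
Proof.
case: E => e1 e2 e3 e4 R_local EE.
have [D dD [u' [uu' u'u]]] := idempotent_intertwiner_unit R_local EE.
exists D => //; exists u', (intertwiner D (mkM2 e1 e2 e3 e4)); do 2 split => //.
by rewrite intertwinerP ?(diag_idempotentP dD) // M2mulA uu' M2mul1r.
Qed.

Definition clean_criterion (A : M2 R) : Prop :=
  [\/ M2unit s A,
      M2unit s (I -- A),
      s \is a GRing.unit /\
        (exists v w : R, in_jacobson (v - 1) /\ in_jacobson w /\
           M2similar s A (M2diag w v))
    | in_jacobson s /\
        (exists v w : R, in_jacobson (v - 1) /\ in_jacobson w /\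
           (M2similar s A (M2diag v w) \/ M2similar s A (M2diag w v)))].

Lemma clean_criterion_similar A B : M2similar s A B ->
  clean_criterion B -> clean_criterion A.
Proof.
move=> AB; case=> [uB|uB|[us [v [w [jv [jw Bwv]]]]]|[js [v [w [jv [jw Bvw]]]]]].
- by constructor 1; apply: M2unit_similar uB.
- by constructor 2; apply: M2unit_similar (M2similar_subl1 AB) uB.
- by constructor 3; split => //; exists v, w; do 2 split => //; apply: M2similar_trans Bwv.
constructor 4; split => //; exists v, w; do 2 split => //.
by case: Bvw => ?; [left | right]; apply: M2similar_trans AB _.
Qed.

(* The swap [[0,1],[1,0]] squares to s^2 I in M_2(R;s), so its inverse is s^-2 times itself. *)
Lemma M2similar_diagC a d : s \is a GRing.unit -> M2similar s (M2diag a d) (M2diag d a).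
Proof.
move=> us; have ut : s ^+ 2 \is a GRing.unit by rewrite unitrX.
exists (mkM2 0 1 1 0), (mkM2 0 (s ^+ 2)^-1 (s ^+ 2)^-1 0); rewrite /M2mul /M2diag /=.
by split; [|split]; congr mkM2; rsimpl; rewrite ?(mulrV ut, mulVr ut, mulrK ut, mulVKr ut) //; rsimpl.
Qed.

Lemma clean_criterion_diag a d : local_ring R -> clean_criterion (M2diag a d).
Proof.
move=> R_local; have dich x := local_unit_or_jacobson x R_local.
have unit_subl1 : (1 - a) \is a GRing.unit -> (1 - d) \is a GRing.unit ->
    clean_criterion (M2diag a d).
  by move=> ua' ud'; constructor 2; rewrite /M2sub /= subrr; apply: M2unit_upper.
have [ua|ja] := dich a.
  have [ud|jd] := dich d; first by constructor 1; apply: M2unit_upper.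
  have [ua1|ja1] := dich (a - 1).
    by apply: unit_subl1; [rewrite -opprB unitrN | apply: jacobson_unit1B].
  have [us|js] := dich s.
    by constructor 3; split => //; exists a, d; do 2 split => //; apply: M2similar_diagC.
  by constructor 4; split => //; exists a, d; do 2 split => //; left; apply: M2similar_refl.
have [ud1|jd1] := dich (d - 1).
  by apply: unit_subl1; [apply: jacobson_unit1B | rewrite -opprB unitrN].
have [us|js] := dich s.
  by constructor 3; split => //; exists d, a; do 2 split => //; apply: M2similar_refl.
by constructor 4; split => //; exists d, a; do 2 split => //; right; apply: M2similar_refl.
Qed.

Lemma M2commute_offdiag A D : D = M2diag 1 0 \/ D = M2diag 0 1 ->
  A ** D = D ** A -> A = M2diag (m11 A) (m22 A).
Proof.
by case: A => a b c d [] ->; rewrite /M2mul /= => -[_ + + _]; rsimpl => ? ?; subst.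
Qed.

Lemma clean_pair_diag_criterion A D : local_ring R -> diag_idempotent D ->
  clean_pair A D -> clean_criterion A.
Proof.
move=> R_local [] -> [_ [AD uAD]].
- by constructor 1; rewrite -(M2subr0 A).
- by constructor 2; apply: M2unit_subC.
- by rewrite (M2commute_offdiag (or_introl erefl) AD); apply: clean_criterion_diag.
by rewrite (M2commute_offdiag (or_intror erefl) AD); apply: clean_criterion_diag.
Qed.

Lemma strongly_clean_criterion A : local_ring R ->
  M2_strongly_clean s A -> clean_criterion A.
Proof.
move=> R_local [E cAE].
have [D dD [P [Q [PQ [QP DE]]]]] := idempotent_similar_diag R_local cAE.1.
have cD : clean_pair (Q ** A ** P) D by rewrite DE; apply: clean_pair_conj.
by apply: clean_criterion_similar (clean_pair_diag_criterion R_local dD cD); exists P, Q.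
Qed.

Lemma M2diag_strongly_clean v w : in_jacobson (v - 1) -> in_jacobson w ->
  M2_strongly_clean s (M2diag w v) /\ M2_strongly_clean s (M2diag v w).
Proof.
move=> /jacobson_subr1_unit uv /jacobson_unitB1 uw.
split; [exists (M2diag 1 0) | exists (M2diag 0 1)]; (split; last split).
all: rewrite /M2mul /M2sub /=; rewrite ?subr0 ?subrr; try by congr mkM2; rsimpl.
all: exact: M2unit_upper.
Qed.

Lemma criterion_strongly_clean A : clean_criterion A -> M2_strongly_clean s A.
Proof.
case=> [uA|uIA|[_ [v [w [jv [jw Awv]]]]]|[_ [v [w [jv [jw Avw]]]]]].
- exists (M2diag 0 0); split; last split; last by rewrite M2subr0.
    by rewrite /M2mul /=; congr mkM2; rsimpl.
  by case: A uA => *; rewrite /M2mul /=; congr mkM2; rsimpl.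
- by exists I; split; last split; rewrite ?M2mul1l ?M2mul1r //; apply: M2unit_subC.
- exact: strongly_clean_similar Awv (M2diag_strongly_clean jv jw).1.
by case: Avw => Avw; apply: strongly_clean_similar Avw _; case: (M2diag_strongly_clean jv jw).
Qed.

End M2Algebra.

Theorem lemma2p11 (R : unitRingType) (s : R) (A : M2 R) :
  local_ring R -> central s ->
  (M2_strongly_clean s A <->
   [\/ M2unit s A,
       M2unit s (M2sub (M2one R) A),
       s \is a GRing.unit /\
         (exists v w : R, in_jacobson (v - 1) /\ in_jacobson w /\
            M2similar s A (M2diag w v))
     | in_jacobson s /\
         (exists v w : R, in_jacobson (v - 1) /\ in_jacobson w /\
            (M2similar s A (M2diag v w) \/ M2similar s A (M2diag w v)))]).
Proof.
move=> R_local s_central; split.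
  exact: strongly_clean_criterion.
exact: criterion_strongly_clean.
Qed.
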